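(* Let $(V,[\cdot,\cdot]_V,\langle\cdot,\cdot\rangle)$ be a quadratic Lie algebra whose adjoint map $\mathrm{ad}:V\to\mathfrak{gl}(V)$ is injective, and let $\mathcal V$ be the string-type Lie 2-algebra: the 2-vector space of the complex $\mathbb R\xrightarrow{0}V$ (objects $V$, morphisms $V\oplus\mathbb R$), bracket $[(u,r),(v,r')]_{\mathcal V}=([u,v]_V,0)$, Jacobiator $J_{u,v,w}=([[u,v]_V,w]_V,\langle[u,v]_V,w\rangle)$. Identify $\mathrm{End}^0_{\mathrm d}(\mathcal V)=\mathfrak{gl}(V)\oplus\mathbb R$ and $\mathrm{End}^1(\mathcal V)=\mathrm{Hom}(V,\mathbb R)$, fix a linear complement $\mathrm{Im}(\mathrm{ad})^\perp$ of $\mathrm{Im}(\mathrm{ad})$ in $\mathfrak{gl}(V)$, and define $\alpha:\mathfrak{gl}(V)\oplus\mathbb R\to\mathrm{Hom}(V,\mathbb R)$ by $\alpha(\mathrm{ad}_u+X+r)(v)=\langle u,v\rangle$ for $u,v\in V$, $X\in\mathrm{Im}(\mathrm{ad})^\perp$, $r\in\mathbb R$. Let $\mu=(\mathrm{Id},\mathrm{Id},\mu_2)$ with $\mu_2(A,B)=([A,B],d\alpha(A,B))$, $d\alpha(A,B)=[A,\alpha(B)]-[B,\alpha(A)]-\alpha([A,B])$. Then $\mu_2(\mathrm{ad}_u,\mathrm{ad}_v)(w)=J_{u,v,w}$ for all $u,v,w\in V$, and the graph $\mathfrak G_{\mathrm{ad}_{\mathcal V}}$ of the linear functor $\mathrm{ad}_{\mathcal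 V}:\mathcal V\to\mathfrak{gl}(\mathcal V)$, $\mathrm{ad}_{\mathcal V}\xi(\eta)=[\xi,\eta]_{\mathcal V}$, is a Dirac structure of the $\mu$-twisted omni-Lie 2-algebra $\mathfrak{gl}(\mathcal V)\oplus_\mu\mathcal V$ whose associated Lie 2-algebra $(\mathcal V,[\cdot,\cdot]_{\mu,\mathrm{ad}_{\mathcal V}},J)$, with $[\xi,\eta]_{\mu,\mathrm{ad}_{\mathcal V}}=\mu_1(\mathrm{ad}_{\mathcal V}\xi)(\eta)$ and $J_{u,v,w}=\mu_2(\mathrm{ad}_{\mathcal V}u,\mathrm{ad}_{\mathcal V}v)(w)$, is exactly the string-type Lie 2-algebra $\mathcal V$.
   Context: All vector spaces are finite-dimensional over $\mathbb R$. A quadratic Lie algebra is a Lie algebra with a nondegenerate symmetric bilinear form invariant under the adjoint action. For a 2-term complex $V_1\xrightarrow{\mathrm d}V_0$, the 2-vector space $\mathbb V$ has objects $V_0$, morphisms $V_0\oplus V_1$ ($u+m$), $s(u+m)=u$, $t(u+m)=u+\mathrm dm$. $\mathrm{End}^0_{\mathrm d}(\mathbb V)=\{A=(A_0,A_1):A_0\mathrm d=\mathrm dA_1\}$, $\mathrm{End}^1(\mathbb V)=\mathrm{Hom}(V_0,V_1)$, $\delta\phi=(\mathrm d\phi,\phi\mathrm d)$; brackets $[A,B]$ componentwise commutator, $[A,\phi]=-[\phi,A]=A_1\phi-\phi A_0$, $[\phi,\psi]_\delta=\phi\mathrm d\psi-\psi\mathrm d\phi$. The strict Lie 2-algebra $\mathfrak{gl}(\mathbb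 V)$ has objects $\mathrm{End}^0_{\mathrm d}(\mathbb V)$, morphisms $A+\phi$, $s(A+\phi)=A$, $t(A+\phi)=A+\delta\phi$, bracket $[A+\phi,B+\psi]=[A,B]+[\phi,\psi]_\delta+[A,\psi]+[\phi,B]$, and acts on $\mathbb V$ by $A(u)=A_0u$, $(A+\phi)(u+m)=A_0u+(A_1m+\phi(u+\mathrm dm))$. A Lie 2-algebra is a 2-vector space with a skew-symmetric bilinear functor and a skew-symmetric trilinear natural isomorphism $J_{x,y,z}:[[x,y],z]\to[x,[y,z]]+[[x,z],y]$ satisfying the Jacobiator identity; Lie 2-algebra (iso)morphisms $(\mu_0,\mu_1,\mu_2)$ consist of a linear functor and a skew-symmetric bilinear natural transformation $\mu_2(u,v):\mu_0[u,v]\to[\mu_0u,\mu_0v]$ compatible with the Jacobiators. The $\mu$-twisted omni-Lie 2-algebra $\mathfrak{gl}(\mathbb V)\oplus_\mu\mathbb V$ is $\mathfrak{gl}(\mathbb V)\oplus\mathbb V$ with bracket $[\![A+\phi+u+m,B+\psi+v+n]\!]_\mu=[A+\phi,B+\psi]+\tfrac12(\mu_1(A+\phi)(v+n)-\mu_1(B+\psi)(u+m))$ and pairing $\langle A+\phi+u+m,B+\psi+v+n\rangle_\mu=\tfrac12(\mu_1(A+\phi)(v+n)+\mu_1(B+\psi)(u+m))$ (on objects, same with $\mu_0$). A Dirac structure is a 2-sub-vector space $L$ with $L=L^\perp$ (w.r.t. $\langle\cdot,\cdot\rangle_\mu$) closed under $[\![\cdot,\cdot]\!]_\mu$. *)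

(* Real vector spaces are modelled by column vectors over an
   arbitrary real field R (generalising R = the reals); linear maps by matrices. *)
From HB Require Import structures.
From mathcomp Require Import all_boot all_order all_algebra.
Set Implicit Arguments. Unset Strict Implicit. Unset Printing Implicit Defensive.
Import Order.TTheory GRing.Theory Num.Theory.
Local Open Scope ring_scope.

Section TwoVect.
Variable R : realFieldType.

(* 2-vector space VV: objects 'cV_p, morphisms u+m = (u,m) : 'cV_p * 'cV_q *)
Definition srcV p q (e : 'cV[R]_p * 'cV[R]_q) : 'cV[R]_p := e.1.
Definition tgtV p q (d : 'M[R]_(p,q)) (e : 'cV[R]_p * 'cV[R]_q) : 'cV[R]_p :=
  e.1 + d *m e.2.
Definition idV p q (u : 'cV[R]_p) : 'cV[R]_p * 'cV[R]_q := (u, 0).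

Definition End0 p q := ('M[R]_p * 'M[R]_q)%type.
Definition End1 p q := 'M[R]_(q,p).
Definition inEnd0 p q (d : 'M[R]_(p,q)) (A : End0 p q) : Prop :=
  A.1 *m d = d *m A.2.
Definition deltaE p q (d : 'M[R]_(p,q)) (phi : End1 p q) : End0 p q :=
  (d *m phi, phi *m d).

(* gl(VV): objects End0, morphisms A+phi = (A,phi) *)
Definition glMor p q := (End0 p q * End1 p q)%type.
Definition glsrc p q (X : glMor p q) : End0 p q := X.1.
Definition gltgt p q (d : 'M[R]_(p,q)) (X : glMor p q) : End0 p q :=
  (X.1.1 + (deltaE d X.2).1, X.1.2 + (deltaE d X.2).2).
Definition glid p q (A : End0 p q) : glMor p q := (A, 0).
Definition glbrO p q (A B : End0 p q) : End0 p q :=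
  (A.1 *m B.1 - B.1 *m A.1, A.2 *m B.2 - B.2 *m A.2).
Definition glbrA p q (A : End0 p q) (phi : End1 p q) : End1 p q :=
  A.2 *m phi - phi *m A.1.
Definition glbrD p q (d : 'M[R]_(p,q)) (phi psi : End1 p q) : End1 p q :=
  phi *m d *m psi - psi *m d *m phi.
Definition glbrM p q (d : 'M[R]_(p,q)) (X Y : glMor p q) : glMor p q :=
  (glbrO X.1 Y.1, glbrD d X.2 Y.2 + glbrA X.1 Y.2 - glbrA Y.1 X.2).
Definition actO p q (A : End0 p q) (u : 'cV[R]_p) : 'cV[R]_p := A.1 *m u.
Definition actM p q (d : 'M[R]_(p,q)) (X : glMor p q)
  (e : 'cV[R]_p * 'cV[R]_q) : 'cV[R]_p * 'cV[R]_q :=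
  (X.1.1 *m e.1, X.1.2 *m e.2 + X.2 *m (e.1 + d *m e.2)).

(* objects: End0 * V0 ; morphisms: glMor * (V0 * V1).  mu0, mu1 is the linear
   functor part of mu; the bracket and pairing only involve mu0, mu1. *)
Definition omObj p q := (End0 p q * 'cV[R]_p)%type.
Definition omMor p q := (glMor p q * ('cV[R]_p * 'cV[R]_q))%type.

Definition half2 p q (e : 'cV[R]_p * 'cV[R]_q) : 'cV[R]_p * 'cV[R]_q :=
  (2^-1 *: e.1, 2^-1 *: e.2).
Definition addV p q (e f : 'cV[R]_p * 'cV[R]_q) : 'cV[R]_p * 'cV[R]_q :=
  (e.1 + f.1, e.2 + f.2).
Definition subV p q (e f : 'cV[R]_p * 'cV[R]_q) : 'cV[R]_p * 'cV[R]_q :=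
  (e.1 - f.1, e.2 - f.2).

Definition ombrO p q (mu0 : End0 p q -> End0 p q) (x y : omObj p q) : omObj p q :=
  (glbrO x.1 y.1, 2^-1 *: (actO (mu0 x.1) y.2 - actO (mu0 y.1) x.2)).
Definition ombrM p q (d : 'M[R]_(p,q)) (mu1 : glMor p q -> glMor p q)
  (e f : omMor p q) : omMor p q :=
  (glbrM d e.1 f.1, half2 (subV (actM d (mu1 e.1) f.2) (actM d (mu1 f.1) e.2))).
Definition ompairO p q (mu0 : End0 p q -> End0 p q) (x y : omObj p q) : 'cV[R]_p :=
  2^-1 *: (actO (mu0 x.1) y.2 + actO (mu0 y.1) x.2).
Definition ompairM p q (d : 'M[R]_(p,q)) (mu1 : glMor p q -> glMor p q)
  (e f : omMor p q) : 'cV[R]_p * 'cV[R]_q :=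
  half2 (addV (actM d (mu1 e.1) f.2) (actM d (mu1 f.1) e.2)).

Definition omsrc p q (e : omMor p q) : omObj p q := (glsrc e.1, srcV e.2).
Definition omtgt p q (d : 'M[R]_(p,q)) (e : omMor p q) : omObj p q :=
  (gltgt d e.1, tgtV d e.2).
Definition omid p q (x : omObj p q) : omMor p q := (glid x.1, idV q x.2).

Definition lcO p q (a : R) (x y : omObj p q) : omObj p q :=
  ((a *: x.1.1 + y.1.1, a *: x.1.2 + y.1.2), a *: x.2 + y.2).
Definition lcM p q (a : R) (e f : omMor p q) : omMor p q :=
  (((a *: e.1.1.1 + f.1.1.1, a *: e.1.1.2 + f.1.1.2), a *: e.1.2 + f.1.2),
   (a *: e.2.1 + f.2.1, a *: e.2.2 + f.2.2)).
Definition zeroO p q : omObj p q := ((0, 0), 0).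
Definition zeroM p q : omMor p q := (((0, 0), 0), (0, 0)).

Definition sub2vect p q (d : 'M[R]_(p,q)) (LO : omObj p q -> Prop)
  (LM : omMor p q -> Prop) : Prop :=
  [/\ (forall x, LO x -> inEnd0 d x.1),
      LO (zeroO p q) /\ (forall a x y, LO x -> LO y -> LO (lcO a x y)),
      LM (zeroM p q) /\ (forall a e f, LM e -> LM f -> LM (lcM a e f)),
      (forall e, LM e -> LO (omsrc e) /\ LO (omtgt d e)) &
      (forall x, LO x -> LM (omid x))].

Definition perpO p q (d : 'M[R]_(p,q)) (mu0 : End0 p q -> End0 p q)
  (mu1 : glMor p q -> glMor p q) (LO : omObj p q -> Prop)
  (LM : omMor p q -> Prop) (x : omObj p q) : Prop :=
  inEnd0 d x.1 /\
  (forall y, LO y -> ompairO mu0 x y = 0) /\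
  (forall f, LM f -> ompairM d mu1 (omid x) f = (0, 0)).
Definition perpM p q (d : 'M[R]_(p,q)) (mu1 : glMor p q -> glMor p q)
  (LM : omMor p q -> Prop) (e : omMor p q) : Prop :=
  inEnd0 d e.1.1 /\ (forall f, LM f -> ompairM d mu1 e f = (0, 0)).

Definition Dirac p q (d : 'M[R]_(p,q)) (mu0 : End0 p q -> End0 p q)
  (mu1 : glMor p q -> glMor p q) (LO : omObj p q -> Prop)
  (LM : omMor p q -> Prop) : Prop :=
  [/\ sub2vect d LO LM,
      (forall x, LO x <-> perpO d mu0 mu1 LO LM x),
      (forall e, LM e <-> perpM d mu1 LM e),
      (forall x y, LO x -> LO y -> LO (ombrO mu0 x y)) &
      (forall e f, LM e -> LM f -> LM (ombrM d mu1 e f))].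

Definition adm n (br : 'cV[R]_n -> 'cV[R]_n -> 'cV[R]_n) (u : 'cV[R]_n) : 'M[R]_n :=
  \matrix_(i, j) (br u (delta_mx j 0)) i 0.
Definition qform n (G : 'M[R]_n) (u v : 'cV[R]_n) : 'M[R]_1 := u^T *m G *m v.

Definition quadLie n (br : 'cV[R]_n -> 'cV[R]_n -> 'cV[R]_n) (G : 'M[R]_n) : Prop :=
  [/\ (forall (a : R) u u' v, br (a *: u + u') v = a *: br u v + br u' v),
      (forall u v, br u v = - br v u),
      (forall u v w, br u (br v w) = br (br u v) w + br v (br u w)),
      G^T = G /\ G \in unitmx &
      (forall u v w, qform G (br w u) v + qform G u (br w v) = 0)].

Definition dS n : 'M[R]_(n,1) := 0.
Definition strbrO n (br : 'cV[R]_n -> 'cV[R]_n -> 'cV[R]_n) (u v : 'cV[R]_n) := br u v.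
Definition strbrM n (br : 'cV[R]_n -> 'cV[R]_n -> 'cV[R]_n)
  (e f : 'cV[R]_n * 'cV[R]_1) : 'cV[R]_n * 'cV[R]_1 := (br e.1 f.1, 0).
Definition strJ n (br : 'cV[R]_n -> 'cV[R]_n -> 'cV[R]_n) (G : 'M[R]_n)
  (u v w : 'cV[R]_n) : 'cV[R]_n * 'cV[R]_1 := (br (br u v) w, qform G (br u v) w).

Definition adV0 n br (u : 'cV[R]_n) : End0 n 1 := (adm br u, 0).
Definition adV1 n br (e : 'cV[R]_n * 'cV[R]_1) : glMor n 1 := (adV0 br e.1, 0).

Definition graphO n br (x : omObj n 1) : Prop := x.1 = adV0 br x.2.
Definition graphM n br (e : omMor n 1) : Prop := e.1 = adV1 br e.2.

Definition dalpha n (alpha : End0 n 1 -> End1 n 1) (A B : End0 n 1) : End1 n 1 :=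
  glbrA A (alpha B) - glbrA B (alpha A) - alpha (glbrO A B).
Definition mu2 n (alpha : End0 n 1 -> End1 n 1) (A B : End0 n 1) : glMor n 1 :=
  (glbrO A B, dalpha alpha A B).

End TwoVect.

(* The Jacobiator of the string Lie 2-algebra is [mu_2(ad_u, ad_v)]: its first
   component is [[ad_u, ad_v] = ad_[u,v]], and its second component reduces,
   through [alpha(ad_u) = <u, .>], to three pairings that invariance of [<.,.>]
   collapses to [<[u,v], w>].  The graph of [ad] is isotropic because
   [ad_x y + ad_y x = 0]; it is maximal isotropic because pairing an element with
   the graph elements over [y] (and with [(0, 1)] for the [R]-components) recovers
   [ad_x y] and kills the [R]-parts; it is closed because [ad] is a Lie algebra
   morphism, the factor [1/2] being absorbed by antisymmetry. *)
From HB Require Import structures.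
From mathcomp Require Import all_boot all_order all_algebra.
Import Order.TTheory GRing.Theory Num.Theory.
Local Open Scope ring_scope.

Lemma mulmx_cV_ext (R : pzRingType) m n (A B : 'M[R]_(m, n)) :
  (forall v : 'cV[R]_n, A *m v = B *m v) -> A = B.
Proof.
move=> eqAB; apply/matrixP => i j.
by have := eqAB (delta_mx j 0); rewrite -!colE => /matrixP /(_ i 0); rewrite !mxE.
Qed.

Lemma scale_half_double (R : numFieldType) m n (A : 'M[R]_(m, n)) :
  2^-1 *: (A + A) = A.
Proof. by rewrite -mulr2n -scaler_nat scalerA mulVf ?pnatr_eq0 // scale1r. Qed.

Lemma scale_half_eq0 (R : numFieldType) m n (A : 'M[R]_(m, n)) :
  (2^-1 *: A == 0) = (A == 0).
Proof. by rewrite scaler_eq0 invr_eq0 pnatr_eq0. Qed.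

Lemma qformNl (R : realFieldType) n (G : 'M[R]_n) x w :
  qform G (- x) w = - qform G x w.
Proof. by rewrite /qform linearN /= !mulNmx. Qed.

Section LieAlgebra.
Variables (R : realFieldType) (n : nat) (br : 'cV[R]_n -> 'cV[R]_n -> 'cV[R]_n).
Hypothesis brDl : forall (a : R) u u' v, br (a *: u + u') v = a *: br u v + br u' v.
Hypothesis brC : forall u v, br u v = - br v u.

Lemma br0l v : br 0 v = 0.
Proof.
have := brDl 1 0 0 v; rewrite !scale1r addr0 -[X in X = _]addr0.
by move/addrI.
Qed.

Lemma br0r u : br u 0 = 0.
Proof. by rewrite brC br0l oppr0. Qed.

Lemma brZDr a u v v' : br u (a *: v + v') = a *: br u v + br u v'.
Proof. by rewrite [LHS]brC brDl (brC u v) (brC u v') opprD scalerN. Qed.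

Lemma brDr u v v' : br u (v + v') = br u v + br u v'.
Proof. by have := brZDr 1 u v v'; rewrite !scale1r. Qed.

Lemma brZr a u v : br u (a *: v) = a *: br u v.
Proof. by rewrite -[_ *: v]addr0 brZDr br0r addr0. Qed.

Lemma brKC u v : br u v + br v u = 0.
Proof. by rewrite (brC v u) subrr. Qed.

Lemma adm_mul u v : adm br u *m v = br u v.
Proof.
have vE : v = \sum_(j < n) v j 0 *: delta_mx j 0.
  by rewrite {1}(matrix_sum_delta v); apply: eq_bigr => j _; rewrite big_ord1.
rewrite {2}vE (big_morph (br u) (brDr u) (br0r u)).
apply/matrixP => i k; rewrite !mxE summxE; apply: eq_bigr => j _.
by rewrite brZr !mxE (ord1 k) mulrC.
Qed.

Lemma adm_linear a u u' : adm br (a *: u + u') = a *: adm br u + adm br u'.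
Proof. by apply/matrixP => i j; rewrite !mxE brDl !mxE. Qed.

Lemma adm0 : adm br 0 = 0.
Proof. by apply/matrixP => i j; rewrite !mxE br0l mxE. Qed.

Hypothesis jacobi : forall u v w, br u (br v w) = br (br u v) w + br v (br u w).

Lemma adm_commutator u v :
  adm br u *m adm br v - adm br v *m adm br u = adm br (br u v).
Proof.
apply: mulmx_cV_ext => w.
by rewrite mulmxBl -!mulmxA !adm_mul jacobi addrK.
Qed.

Lemma inEnd0_dS (A : End0 R n 1) : inEnd0 (dS R n) A.
Proof. by rewrite /inEnd0 /dS mulmx0 mul0mx. Qed.

Lemma adV0_act u v : actO (adV0 br u) v = strbrO br u v.
Proof. exact: adm_mul. Qed.

Lemma adV1_act e f : actM (dS R n) (adV1 br e) f = strbrM br e f.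
Proof. by rewrite /actM /strbrM /= adm_mul !mul0mx addr0. Qed.

Section Jacobiator.
Variables (G : 'M[R]_n) (alpha : End0 R n 1 -> End1 R n 1).
Hypothesis G_invariant : forall u v w, qform G (br w u) v + qform G u (br w v) = 0.
Hypothesis alpha_adm : forall u r v, alpha (adm br u, r) *m v = qform G u v.

Lemma qform_brr u v w : qform G u (br v w) = qform G (br u v) w.
Proof.
have /eqP := G_invariant u w v; rewrite brC qformNl addrC subr_eq0.
by move/eqP.
Qed.

Lemma mu2_adV0_Jacobiator u v w :
  actM (dS R n) (mu2 alpha (adV0 br u) (adV0 br v)) (w, 0) = strJ br G u v w.
Proof.
rewrite /actM /mu2 /strJ /= mulmx0 add0r mulmx0 addr0.
congr (_, _); first by rewrite adm_commutator adm_mul.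
rewrite /dalpha /glbrA /glbrO /= !mul0mx !sub0r oppr0 adm_commutator.
rewrite !mulmxBl !mulNmx -!mulmxA !adm_mul !alpha_adm.
by rewrite !qform_brr (brC v u) qformNl opprK addrK.
Qed.

End Jacobiator.

Lemma graph_sub2vect : sub2vect (dS R n) (graphO br) (graphM br).
Proof.
split.
- by move=> x _; apply: inEnd0_dS.
- split; first by rewrite /graphO /zeroO /adV0 /= adm0.
  move=> a [[A r] x] [[B s] y]; rewrite /graphO /lcO /adV0 /= => -[-> ->] [-> ->].
  by rewrite adm_linear // scaler0 addr0.
- split; first by rewrite /graphM /zeroM /adV1 /adV0 /= adm0.
  move=> a [[[A r] p] [x m]] [[[B s] q] [y k]].
  rewrite /graphM /lcM /adV1 /adV0 /= => -[-> -> ->] [-> -> ->].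
  by rewrite adm_linear // !scaler0 !addr0.
- move=> [[[A r] p] [x m]].
  rewrite /graphM /graphO /omsrc /omtgt /adV1 /adV0 /glsrc /gltgt /srcV /tgtV.
  by rewrite /deltaE /dS /= => -[-> -> ->]; rewrite !mul0mx !addr0.
- by move=> [[A r] x]; rewrite /graphO /graphM /omid /glid /idV /adV1 => -[-> ->].
Qed.

Lemma eq_adm_of_pairing (A : 'M[R]_n) x :
  (forall y, 2^-1 *: (A *m y + br y x) = 0) -> A = adm br x.
Proof.
move=> pair0; apply: mulmx_cV_ext => y; rewrite adm_mul.
by have /eqP := pair0 y; rewrite scale_half_eq0 addr_eq0 brC opprK => /eqP.
Qed.

Lemma graphO_perp x :
  graphO br x <-> perpO (dS R n) id id (graphO br) (graphM br) x.
Proof.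
case: x => [[A r] x]; split.
- rewrite /graphO /adV0 /= => -[-> ->]; split; first exact: inEnd0_dS.
  split.
  + move=> [[B s] y]; rewrite /graphO /adV0 /ompairO /actO /= => -[-> _].
    by rewrite !adm_mul brKC // scaler0.
  + move=> [[[B s] p] [y m]].
    rewrite /graphM /adV1 /adV0 /ompairM /omid /glid /idV /actM /half2 /addV /dS /=.
    by move=> -[-> -> ->]; rewrite !adm_mul brKC // !mul0mx !addr0 !scaler0.
- move=> [_ [pairO pairM]]; rewrite /graphO /adV0 /=.
  have -> : A = adm br x.
    apply: eq_adm_of_pairing => y.
    by have := pairO ((adm br y, 0), y) erefl; rewrite /ompairO /actO /= adm_mul.
  have -> // : r = 0.
  have := pairM (((adm br 0, 0), 0), (0, 1)) erefl.
  rewrite /ompairM /omid /glid /idV /actM /half2 /addV /dS /= => -[_ /eqP].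
  by rewrite !mul0mx mulmx1 !addr0 scale_half_eq0 => /eqP.
Qed.

Lemma graphM_perp e :
  graphM br e <-> perpM (dS R n) id (graphM br) e.
Proof.
case: e => [[[A r] p] [x m]]; split.
- rewrite /graphM /adV1 /adV0 /= => -[-> -> ->]; split; first exact: inEnd0_dS.
  move=> [[[B s] q] [y k]].
  rewrite /graphM /adV1 /adV0 /ompairM /actM /half2 /addV /dS /=.
  by move=> -[-> -> ->]; rewrite !adm_mul brKC // !mul0mx ?mulmx0 !addr0 !scaler0.
- move=> [_ pairM]; rewrite /graphM /adV1 /adV0 /=.
  have pair_ad y : 2^-1 *: (A *m y + br y x) = 0 /\ 2^-1 *: (p *m y) = 0.
    have := pairM (((adm br y, 0), 0), (y, 0)) erefl.
    rewrite /ompairM /actM /half2 /addV /dS /= adm_mul.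
    by rewrite !mul0mx ?mulmx0 !addr0 ?add0r => -[-> ->].
  have -> : A = adm br x by apply: eq_adm_of_pairing => y; case: (pair_ad y).
  have -> : p = 0.
    apply: mulmx_cV_ext => y; rewrite mul0mx.
    by have [_ /eqP] := pair_ad y; rewrite scale_half_eq0 => /eqP.
  have -> // : r = 0.
  have := pairM (((adm br 0, 0), 0), (0, 1)) erefl.
  rewrite /ompairM /actM /half2 /addV /dS /= => -[_ /eqP].
  by rewrite !(mul0mx, mulmx0, mulmx1, addr0) scale_half_eq0 => /eqP.
Qed.

Lemma graphO_bracket_closed x y :
  graphO br x -> graphO br y -> graphO br (ombrO id x y).
Proof.
case: x y => [[A r] x] [[B s] y]; rewrite /graphO /adV0 /ombrO /glbrO /actO /=.
move=> -[-> ->] [-> ->].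
by rewrite !mulmx0 subrr adm_commutator !adm_mul (brC y x) opprK scale_half_double.
Qed.

Lemma graphM_bracket_closed e f :
  graphM br e -> graphM br f -> graphM br (ombrM (dS R n) id e f).
Proof.
case: e f => [[[A r] p] [x m]] [[[B s] q] [y k]].
rewrite /graphM /adV1 /adV0 /ombrM /glbrM /glbrO /glbrD /glbrA /actM /half2 /subV /dS /=.
move=> -[-> -> ->] [-> -> ->].
rewrite adm_commutator !(mulmx0, mul0mx, subrr, addr0, sub0r, oppr0) !adm_mul.
by rewrite (brC y x) opprK scale_half_double.
Qed.

Lemma graph_adV_Dirac : Dirac (dS R n) id id (graphO br) (graphM br).
Proof.
split; [exact: graph_sub2vect | exact: graphO_perp | exact: graphM_perp |
        exact: graphO_bracket_closed | exact: graphM_bracket_closed].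
Qed.

End LieAlgebra.

Theorem mainTheorem17 (R : realFieldType) (n : nat)
  (br : 'cV[R]_n -> 'cV[R]_n -> 'cV[R]_n) (G : 'M[R]_n)
  (C : 'M[R]_n -> Prop) (alpha : End0 R n 1 -> End1 R n 1) :
  quadLie br G ->
  injective (adm br) ->
  (* C = Im(ad)^perp : a linear complement of Im(ad) in gl(V) *)
  C 0 -> (forall (a : R) X Y, C X -> C Y -> C (a *: X + Y)) ->
  (forall u, C (adm br u) -> adm br u = 0) ->
  (forall A, exists u X, C X /\ A = adm br u + X) ->
  (* alpha (ad_u + X + r)(v) = <u,v> *)
  (forall u X (r : 'M[R]_1) v, C X -> alpha (adm br u + X, r) *m v = qform G u v) ->
  [/\ (forall u v w,
         actM (dS R n) (mu2 alpha (adV0 br u) (adV0 br v)) (w, 0) = strJ br G u v w),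
      Dirac (dS R n) id id (graphO br) (graphM br),
      (forall u v, actO (id (adV0 br u)) v = strbrO br u v) &
      (forall e f, actM (dS R n) (id (adV1 br e)) f = strbrM br e f)].
Proof.
(* Only the values of [alpha] on [Im ad] enter, so injectivity of [ad] and the
   complement property of [C] beyond [C 0] are not needed. *)
move=> [brDl brC jacobi _ G_invariant] _ C0 _ _ _ alpha_def.
have alpha_adm u r v : alpha (adm br u, r) *m v = qform G u v.
  by have := alpha_def u 0 r v C0; rewrite addr0.
split.
- exact: mu2_adV0_Jacobiator.
- exact: graph_adV_Dirac.
- exact: adV0_act.
- exact: adV1_act.
Qed.
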